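(* Let $S\subseteq\mathbb{R}^n\times\mathbb{R}^m$ be convex, let the convex projection (CP) be self-bounded, fix $p\in[1,\infty]$ and $\epsilon>0$. If $\bar S\subseteq S$ is a finite $\epsilon$-solution of (CP) (under the $p$-norm), then $\bar S$ is a finite $(\underline{\kappa}\epsilon)$-solution of (MOCP) (under the $p$-norm), where $\underline{\kappa}=\underline{\kappa}(m,p)=m^{\frac{p-1}{p}}(m+1)^{\frac1p}$ (equal to $m$ for $p=\infty$).
   Context: $\|\cdot\|_p$ is the $p$-norm and $B_\epsilon$ the closed $\epsilon$-ball around $0$ in it. (CP): compute $Y=\{y:\exists x,(x,y)\in S\}$; recession cone $A_\infty=\{y: x+\lambda y\in A\ \forall x\in A,\lambda\ge0\}$. (CP) is self-bounded if $Y\ne\mathbb{R}^m$ and $Y\subseteq\operatorname{conv}\{y^{(1)},\dots,y^{(k)}\}+(\operatorname{cl}Y)_\infty$ for finitely many points $y^{(i)}$ (this includes the bounded case $Y\subseteq B_K$, where $(\operatorname{cl}Y)_\infty=\{0\}$). A nonempty finite $\bar S\subseteq S$ is a finite $\epsilon$-solution of (CP) if $Y\subseteq\operatorname{conv}\operatorname{proj}_y[\bar S]+(\operatorname{cl}Y)_\infty+B_\epsilon$. (MOCP): minimize $P(x,y)=(y,-\mathbf{1}^\top y)$ w.r.t. $\le_{\mathbb{R}^{m+1}_+}$ over $(x,y)\in S$, upper image $\mathcal{P}=\operatorname{cl}(P[S]+\mathbb{R}^{m+1}_+)$; $\mathbb{1}\in\mathbb{R}^{m+1}$ is the all-ones vector.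 For self-bounded (MOCP), a nonempty finite $\bar S\subseteq S$ is a finite $\epsilon$-solution of (MOCP) if $\mathcal{P}\subseteq\operatorname{conv}P[\bar S]+\mathcal{P}_\infty-\epsilon\{\|\mathbb{1}\|_p^{-1}\mathbb{1}\}$. *)

From HB Require Import structures.
From mathcomp Require Import all_boot all_order all_algebra.
From mathcomp Require Import all_classical all_reals all_analysis.
Set Implicit Arguments. Unset Strict Implicit. Unset Printing Implicit Defensive.
Import Order.TTheory GRing.Theory Num.Theory.
Import numFieldNormedType.Exports.
Local Open Scope classical_set_scope.
Local Open Scope ring_scope.

Section Defs.
Variable R : realType.

Definition pnorm (p : \bar R) (k : nat) (v : 'rV[R]_k) : R :=
  match p with
  | +oo%E => \big[Num.max/0]_(i < k) `|v 0 i|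
  | r%:E => (\sum_(i < k) `|v 0 i| `^ r) `^ r^-1
  | -oo%E => 0
  end.

Definition pball (p : \bar R) (k : nat) (eps : R) : set 'rV[R]_k :=
  [set v | pnorm p v <= eps].

Definition msum (k : nat) (A B : set 'rV[R]_k) : set 'rV[R]_k :=
  [set a + b | a in A & b in B].

Definition conv (k : nat) (A : set 'rV[R]_k) : set 'rV[R]_k :=
  [set y | exists (N : nat) (a : 'I_N -> 'rV[R]_k) (l : 'I_N -> R),
     [/\ forall i, A (a i), forall i, 0 <= l i, \sum_(i < N) l i = 1
       & y = \sum_(i < N) l i *: a i]].

Definition recc (k : nat) (A : set 'rV[R]_k) : set 'rV[R]_k :=
  [set y | forall x, A x -> forall lam : R, 0 <= lam -> A (x + lam *: y)].

Definition convex_pairs (n m : nat) (S : set ('rV[R]_n * 'rV[R]_m)) : Prop :=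
  forall a b, S a -> S b -> forall t : R, 0 <= t <= 1 ->
    S (t *: a.1 + (1 - t) *: b.1, t *: a.2 + (1 - t) *: b.2).

Definition projY (n m : nat) (S : set ('rV[R]_n * 'rV[R]_m)) : set 'rV[R]_m :=
  [set y | exists x, S (x, y)].

Definition CP_self_bounded (n m : nat) (S : set ('rV[R]_n * 'rV[R]_m)) : Prop :=
  projY S <> setT /\
  exists ys : seq 'rV[R]_m,
    projY S `<=` msum (conv [set` ys]) (recc (closure (projY S))).

Definition CP_eps_solution (n m : nat) (p : \bar R) (eps : R)
    (S : set ('rV[R]_n * 'rV[R]_m)) (Sbar : seq ('rV[R]_n * 'rV[R]_m)) : Prop :=
  [/\ Sbar <> [::], (forall z, z \in Sbar -> S z) &
      projY S `<=` msum (msum (conv [set` map snd Sbar]) (recc (closure (projY S))))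
                        (@pball p m eps)].

(* objective of (MOCP): P(x,y) = (y, - 1^T y) in R^(m+1) *)
Definition Pobj (n m : nat) (z : 'rV[R]_n * 'rV[R]_m) : 'rV[R]_(m + 1) :=
  row_mx z.2 (- \sum_(j < m) z.2 0 j)%:M.

Definition orthant (k : nat) : set 'rV[R]_k := [set v | forall i, 0 <= v 0 i].

Definition upper_image (n m : nat) (S : set ('rV[R]_n * 'rV[R]_m)) : set 'rV[R]_(m + 1) :=
  closure (msum (@Pobj n m @` S) (@orthant (m + 1)%N)).

Definition MOCP_eps_solution (n m : nat) (p : \bar R) (eps : R)
    (S : set ('rV[R]_n * 'rV[R]_m)) (Sbar : seq ('rV[R]_n * 'rV[R]_m)) : Prop :=
  [/\ Sbar <> [::], (forall z, z \in Sbar -> S z) &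
      upper_image S `<=`
        msum (msum (conv [set` map (@Pobj n m) Sbar]) (recc (upper_image S)))
             [set - (eps * (pnorm p (const_mx 1 : 'rV[R]_(m + 1)))^-1) *: const_mx 1]].

Definition kappa (m : nat) (p : \bar R) : R :=
  match p with
  | +oo%E => m%:R
  | r%:E => (m%:R `^ ((r - 1) / r)) * ((m + 1)%:R `^ r^-1)
  | -oo%E => 0
  end.

End Defs.

From Pilot Require Import Defs.
From HB Require Import structures.
From mathcomp Require Import all_boot all_order all_algebra.
From mathcomp Require Import all_classical all_reals all_analysis.
From mathcomp.algebra_tactics Require Import ring lra.
Import Order.TTheory GRing.Theory Num.Theory.
Import numFieldNormedType.Exports.
Local Open Scope classical_set_scope.
Local Open Scope ring_scope.

(* Write P y = (y, -1^T y), a linear map R^m -> R^(m+1) given by the matrix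
   [obj_mx], so that Pobj (x, y) = P y, and s = kappa eps / ||1||_p.  Every
   element of P[S] + R^(m+1)_+ has the form P(c + d + b) + q with
   c in conv Y-bar, d in rec(cl Y), ||b||_p <= eps and q >= 0, and then
     P(c + d + b) + q + s 1 = P c + (P d + (P b + s 1 + q)),
   where P c lies in conv P[S-bar], P d in the recession cone of the upper
   image, and P b + s 1 >= 0 thanks to the norm inequality
   ||b||_1 <= m^((p-1)/p) ||b||_p = s / eps * ||b||_p.
   Passing to the closure (the upper image) needs the right-hand set
   conv P[S-bar] + rec(upper image) to be closed: it is the sum of a compact
   set (the continuous image of a simplex) and a closed cone. *)

Section ConvexProjection.
Variable R : realType.

Lemma closure_image_sub {T U : topologicalType} {f : T -> U} {A : set T} {B : set U} :
  continuous f -> f @` A `<=` B -> f @` closure A `<=` closure B.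
Proof.
move=> fc fAB _ [x Ax <-].
suff : closure A `<=` f @^-1` closure B by apply.
rewrite closureE; apply: smallest_sub.
  by apply: preimage_closed => [? _|]; [exact: fc | exact: closed_closure].
by move=> a Aa; apply: subset_closure; apply: fAB; exists a.
Qed.

(* In a normed space the sum of a compact set and a closed set is closed:
   a cluster point k of the almost-decompositions of x gives x - k in C. *)
Lemma closed_msum_compact (V : normedModType R) (K C : set V) :
  compact K -> closed C -> closed [set k + c | k in K & c in C].
Proof.
move=> Kcpt Ccl x xcl.
pose E (e : R) := K `&` [set k | exists2 c, C c & `|x - (k + c)| < e].
have Ene e : 0 < e -> E e !=set0.
  move=> e0; have [_ [[k Kk [c Cc <-]] kcx]] := xcl _ (nbhsx_ballx x e e0).
  by exists k; split => //; exists c => //; move: kcx; rewrite -ball_normE.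
have Emono d1 d2 : d1 <= d2 -> E d1 `<=` E d2.
  by move=> d12 k [Kk [c Cc kc]]; split => //; exists c => //; exact: lt_le_trans d12.
pose F := filter_from [set e : R | 0 < e] E.
have PF : ProperFilter F.
  apply: filter_from_proper; last by move=> e /Ene.
  apply: filter_from_filter; first by exists 1; rewrite /= ltr01.
  move=> d1 d2 d10 d20; exists (Num.min d1 d2); first by rewrite /= lt_min d10 d20.
  by move=> k Ek; split; apply: Emono Ek; rewrite ge_min lexx ?orbT.
have FK : F K by exists 1; [exact: ltr01 | move=> k []].
have [k [Kk clk]] := Kcpt F PF FK.
exists k => //; exists (x - k); last by rewrite addrC subrK.
apply: Ccl => B /nbhs_ballP [e e0 eB].
have e20 : 0 < e / 2 by rewrite divr_gt0.
have FE : F (E (e / 2)) by exists (e / 2).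
have [k' [[_ [c Cc kc]] kk']] := clk _ _ FE (nbhsx_ballx k _ e20).
exists c; split => //; apply: eB; rewrite -ball_normE /ball_ /=.
rewrite -ball_normE /ball_ /= distrC in kk'.
rewrite addrAC; apply: le_lt_trans (ler_distD k' _ _) _.
rewrite opprD addrA addrAC in kc; lra.
Qed.

Lemma mulmx_continuous k l (A : 'M[R]_(k, l)) : continuous (fun y : 'rV[R]_k => y *m A).
Proof.
move=> x B /nbhs_ballP [e e0 eB]; apply/nbhs_ballP.
pose C := \sum_(i < k) \sum_(j < l) `|A i j| + 1.
have C0 : 0 < C by rewrite ltr_pwDr // sumr_ge0 // => i _; rewrite sumr_ge0.
exists (e / C); first by rewrite /= divr_gt0.
move=> y [_ xy]; apply: eB; split => // i j; rewrite /ball /= !mxE -sumrB.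
have colC : \sum_(h < k) `|A h j| < C.
  apply: le_lt_trans (ltr_pwDr ltr01 (lexx _)).
  rewrite exchange_big /= (bigD1 j) //= lerDl; apply: sumr_ge0 => *.
  by rewrite sumr_ge0.
apply: (le_lt_trans (ler_norm_sum _ _ _)).
apply: (@le_lt_trans _ _ (e / C * \sum_(h < k) `|A h j|)).
  rewrite mulr_sumr; apply: ler_sum => h _; rewrite -mulrBl normrM ler_wpM2r //.
  by have := xy i h; rewrite /ball /= => /ltW.
by rewrite -[X in _ < X](divfK (lt0r_neq0 C0)) ltr_pM2l // divr_gt0.
Qed.

Lemma shift_continuous {V : normedModType R} (c : V) : continuous (fun x : V => x + c).
Proof. by move=> x; apply: cvgD; [exact: cvg_id | exact: cvg_cst]. Qed.

Lemma ray_continuous {V : normedModType R} (c : V) (l : R) :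
  continuous (fun y : V => c + l *: y).
Proof. by move=> y; apply: cvgD; [exact: cvg_cst | apply: cvgZr; exact: cvg_id]. Qed.

Definition simplex N : set 'rV[R]_N :=
  [set v | (forall j, 0 <= v 0 j) /\ \sum_(j < N) v 0 j = 1].

Definition comb {k} (s : seq 'rV[R]_k) (v : 'rV[R]_(size s)) : 'rV[R]_k :=
  \sum_(j < size s) v 0 j *: s`_j.

Lemma sum_coord_continuous N : continuous (fun v : 'rV[R]_N => \sum_(j < N) v 0 j).
Proof.
have -> : (fun v : 'rV[R]_N => \sum_(j < N) v 0 j) =
    (fun M : 'M[R]_1 => M 0 0) \o (fun v => v *m const_mx 1).
  by apply/funext => v /=; rewrite mxE; apply: eq_bigr => j _; rewrite mxE mulr1.
move=> v; apply: continuous_comp; first exact: mulmx_continuous.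
exact: coord_continuous.
Qed.

(* The simplex is a closed subset of the compact box [0, 1]^N. *)
Lemma simplex_compact N : compact (simplex N).
Proof.
have box : compact [set v : 'rV[R]_N | forall j, `[0, 1]%classic (v 0 j)].
  by apply: (@rV_compact R N (fun=> `[0 : R, 1]%classic)) => j; exact: segment_compact.
apply: (subclosed_compact _ box).
- move=> v vcl; split.
    move=> j; apply: closed_ge.
    apply: (@closure_image_sub _ _ (fun w : 'rV[R]_N => w 0 j) (simplex N)).
    + exact: coord_continuous.
    + by move=> x [w [w0 _] <-]; exact: w0.
    + by exists v.
  apply: closed_eq.
  apply: (@closure_image_sub _ _ (fun w : 'rV[R]_N => \sum_j w 0 j) (simplex N)).
  + exact: sum_coord_continuous.
  + by move=> x [w [_ w1] <-].
  + by exists v.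
- move=> v [v0 v1] j; rewrite /= in_itv /= v0 -v1.
  by rewrite (bigD1 j) //= lerDl sumr_ge0.
Qed.

(* A convex combination of points of s can be regrouped into one weight per
   position of s, by collecting the weights of equal points. *)
Lemma conv_seqE k (s : seq 'rV[R]_k) : Defs.conv [set` s] = comb s @` simplex (size s).
Proof.
apply/seteqP; split=> [_ [N [a [l [sa l0 l1 ->]]]]|_ [v [v0 v1] <-]]; last first.
  by exists (size s), (fun j => s`_j), (fun j => v 0 j); split => // j; exact: mem_nth.
have fP i : (index (a i) s < size s)%N by rewrite index_mem; exact: sa.
pose f i := Ordinal (fP i).
have af i : s`_(f i) = a i by rewrite nth_index //; exact: sa.
exists (\row_j \sum_(i < N | f i == j) l i); first split.
- by move=> j; rewrite mxE sumr_ge0.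
- rewrite -l1 [RHS](partition_big f xpredT) //=.
  by apply: eq_bigr => j _; rewrite mxE.
- rewrite /comb (partition_big f xpredT) //=; apply: eq_bigr => j _.
  rewrite mxE scaler_suml; apply: eq_bigr => i /eqP <-.
  by rewrite af.
Qed.

Lemma comb_continuous k (s : seq 'rV[R]_k) : continuous (comb s).
Proof.
have -> : comb s = (fun v => v *m \matrix_(j < size s) s`_j).
  by apply/funext => v; rewrite mulmx_sum_row; apply: eq_bigr => j _; rewrite rowK.
exact: mulmx_continuous.
Qed.

Lemma conv_seq_compact k (s : seq 'rV[R]_k) : compact (Defs.conv [set` s]).
Proof.
rewrite conv_seqE; apply: continuous_compact; last exact: simplex_compact.
exact/continuous_subspaceT/comb_continuous.
Qed.

Lemma conv_mulmx k l (M : 'M[R]_(k, l)) (A : set 'rV[R]_k) (B : set 'rV[R]_l) c :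
  (forall a, A a -> B (a *m M)) -> Defs.conv A c -> Defs.conv B (c *m M).
Proof.
move=> AB [N [a [w [Aa w0 w1 ->]]]]; exists N, (fun i => a i *m M), w.
by split => // [i|]; [exact: AB | rewrite mulmx_suml; apply: eq_bigr => i _; rewrite scalemxAl].
Qed.

Lemma recc_add k (A : set 'rV[R]_k) a b : recc A a -> recc A b -> recc A (a + b).
Proof. by move=> Aa Ab x Ax l l0; rewrite scalerDr addrA; apply: Ab => //; exact: Aa. Qed.

Lemma recc_closure k (A : set 'rV[R]_k) w :
  (forall a, A a -> forall l, 0 <= l -> closure A (a + l *: w)) -> recc (closure A) w.
Proof.
move=> Aw x xcl l l0.
have sub : (fun x => x + l *: w) @` A `<=` closure A by move=> _ [a Aa <-]; exact: Aw.
apply: closed_closure; apply: (closure_image_sub (shift_continuous (l *: w)) sub).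
by exists x.
Qed.

(* The recession cone of a closed set is closed: it is an intersection of
   preimages of the set under the continuous maps y |-> x + l y. *)
Lemma closed_recc k (A : set 'rV[R]_k) : closed A -> closed (recc A).
Proof.
move=> Acl y ycl x Ax l l0.
have sub : (fun y => x + l *: y) @` recc A `<=` A by move=> _ [z z_recc <-]; exact: z_recc.
by apply: Acl; apply: (closure_image_sub (ray_continuous x l) sub); exists y.
Qed.

(* Bernoulli's inequality for real exponents, from Young's inequality. *)
Lemma bernoulli_powR (r a : R) : 1 <= r -> 0 <= a -> 1 + r * (a - 1) <= a `^ r.
Proof.
move=> r1 a0; have [->|rn1] := eqVneq r 1; first by rewrite powRr1 // mul1r addrC subrK.
have r0 : 0 < r by lra.
have r1' : 0 < r - 1 by rewrite subr_gt0 lt_neqAle eq_sym rn1.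
pose q := r / (r - 1).
have q0 : 0 < q by rewrite divr_gt0.
have pq : r^-1 + q^-1 = 1 by rewrite /q invf_div; field; rewrite gt_eqF.
have := conjugate_powR a0 ler01 r0 q0 pq; rewrite mulr1 powR1 => young.
have -> : a `^ r = r * (a `^ r / r + 1 / q) - (r - 1).
  by rewrite /q; field; rewrite !gt_eqF.
have := ler_wpM2l (ltW r0) young; lra.
Qed.

(* Power-mean inequality ||x||_1 <= k^((r-1)/r) ||x||_r: normalising by the
   mean mu, Bernoulli gives sum (x_i/mu)^r >= k. *)
Lemma sum_le_power_mean k (r : R) (x : 'I_k -> R) :
  (0 < k)%N -> 1 <= r -> (forall i, 0 <= x i) ->
  \sum_i x i <= k%:R `^ ((r - 1) / r) * (\sum_i x i `^ r) `^ r^-1.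
Proof.
move=> k0 r1 x0; have r0 : 0 < r by lra.
have kpos : 0 < k%:R :> R by rewrite ltr0n.
set A := \sum_i x i.
have [A0|Apos] := eqVneq A 0; first by rewrite A0 mulr_ge0 ?powR_ge0.
have {}Apos : 0 < A by rewrite lt0r Apos sumr_ge0.
pose mu := A / k%:R.
have mu0 : 0 < mu by rewrite divr_gt0.
have bern : k%:R <= \sum_i (x i / mu) `^ r.
  apply: le_trans _ (ler_sum _ (fun i _ => bernoulli_powR _ _ r1 (divr_ge0 (x0 i) (ltW mu0)))).
  rewrite big_split /= sumr_const card_ord -mulr_sumr sumrB -mulr_suml sumr_const card_ord.
  by rewrite -/A /mu invf_div mulrCA divff ?gt_eqF // mulr1 subrr mulr0 addr0.
have lower : k%:R * mu `^ r <= \sum_i x i `^ r.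
  have -> : \sum_i x i `^ r = mu `^ r * \sum_i (x i / mu) `^ r.
    rewrite mulr_sumr; apply: eq_bigr => i _.
    rewrite -powRM ?(ltW mu0) ?(divr_ge0 (x0 i) (ltW mu0)) //.
    by rewrite mulrC divfK ?gt_eqF.
  by rewrite mulrC ler_pM2l ?powR_gt0.
have root : k%:R `^ r^-1 * mu <= (\sum_i x i `^ r) `^ r^-1.
  have -> : k%:R `^ r^-1 * mu = (k%:R * mu `^ r) `^ r^-1.
    by rewrite powRM ?powR_ge0 ?ltW // -powRrM divff ?gt_eqF // powRr1 // ltW.
  apply: ge0_ler_powR => //; rewrite ?nnegrE ?invr_ge0 ?mulr_ge0 ?powR_ge0 ?sumr_ge0 //.
  - exact: ltW.
  - by move=> i _; rewrite powR_ge0.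
have split_k : k%:R `^ ((r - 1) / r) * k%:R `^ r^-1 = k%:R :> R.
  rewrite -powRD; last by rewrite pnatr_eq0 -lt0n k0 implybT.
  have -> : (r - 1) / r + r^-1 = 1 by field; rewrite gt_eqF.
  by rewrite powRr1 // ltW.
apply: le_trans (ler_wpM2l (powR_ge0 _ _) root).
by rewrite mulrA split_k /mu mulrC divfK ?gt_eqF.
Qed.

Lemma l1_le_kappa_pnorm m (p : \bar R) (eps : R) (b : 'rV[R]_m) :
  (0 < m)%N -> (1 <= p)%E -> pnorm p b <= eps ->
  \sum_j `|b 0 j| <= kappa m p * eps * (pnorm p (const_mx 1 : 'rV[R]_(m + 1)))^-1.
Proof.
move=> m0; case: p => [r| |] //=; rewrite ?lee_fin => r1 hb; last first.
  have -> : \big[Num.max/0]_(i < m + 1) `|(const_mx 1 : 'rV[R]_(m + 1)) 0 i| = 1.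
    apply/le_anti/andP; split.
      by apply/bigmax_leP; split => // i _; rewrite mxE normr1.
    by apply: le_trans (le_bigmax _ _ (Ordinal (ltn_addl m (ltn0Sn 0)))); rewrite mxE normr1.
  have bj j : `|b 0 j| <= eps by apply: le_trans hb; exact: le_bigmax.
  apply: le_trans (ler_sum _ (fun j _ => bj j)) _.
  by rewrite sumr_const card_ord invr1 mulr1 mulr_natl.
have r0 : 0 < r by lra.
have -> : \sum_(i < m + 1) `|(const_mx 1 : 'rV[R]_(m + 1)) 0 i| `^ r = (m + 1)%:R.
  by under eq_bigr do rewrite mxE normr1 powR1; rewrite sumr_const card_ord.
have pos : 0 < (m + 1)%:R `^ r^-1 :> R by rewrite powR_gt0 // ltr0n addn1.
have -> : m%:R `^ ((r - 1) / r) * (m + 1)%:R `^ r^-1 * eps / (m + 1)%:R `^ r^-1 =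
    m%:R `^ ((r - 1) / r) * eps :> R by field; rewrite gt_eqF.
apply: le_trans (@sum_le_power_mean _ _ _ m0 r1 (fun j => normr_ge0 (b 0 j))) _.
by rewrite ler_wpM2l // powR_ge0.
Qed.

Definition obj_mx m : 'M[R]_(m, m + 1) := row_mx 1%:M (- const_mx 1).

Lemma obj_mxE m (y : 'rV[R]_m) : y *m obj_mx m = row_mx y (- \sum_(j < m) y 0 j)%:M.
Proof.
rewrite mul_mx_row mulmx1 mulmxN; congr row_mx.
apply/rowP => i; rewrite ord1 !mxE eqxx mulr1n; congr (- _).
by apply: eq_bigr => j _; rewrite mxE mulr1.
Qed.

Lemma PobjE n m (z : 'rV[R]_n * 'rV[R]_m) : Pobj z = z.2 *m obj_mx m.
Proof. by rewrite obj_mxE. Qed.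

Lemma obj_continuous m (q : 'rV[R]_(m + 1)) :
  continuous (fun y : 'rV[R]_m => y *m obj_mx m + q).
Proof.
move=> y; apply: (@continuous_comp _ _ _ (fun y : 'rV[R]_m => y *m obj_mx m) (fun x => x + q)).
  exact: mulmx_continuous.
exact: shift_continuous.
Qed.

Lemma orthantD k (a b : 'rV[R]_k) : orthant a -> orthant b -> orthant (a + b).
Proof. by move=> a0 b0 i; rewrite mxE addr_ge0. Qed.

Lemma orthantZ k c (a : 'rV[R]_k) : 0 <= c -> orthant a -> orthant (c *: a).
Proof. by move=> c0 a0 i; rewrite mxE mulr_ge0. Qed.

(* Shifting P b by t 1 lands in the orthant as soon as ||b||_1 <= t: every
   coordinate of P b, including -1^T b, is bounded by ||b||_1 in absolute value. *)
Lemma obj_orthant m (b : 'rV[R]_m) (t : R) :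
  \sum_j `|b 0 j| <= t -> orthant (b *m obj_mx m + t *: const_mx 1).
Proof.
move=> bt k; rewrite obj_mxE !mxE mulr1; case: fintype.split => j /=.
  have := ler_norm (- b 0 j); rewrite normrN.
  have : `|b 0 j| <= \sum_i `|b 0 i| by rewrite (bigD1 j) //= lerDl sumr_ge0.
  lra.
rewrite !mxE ord1 eqxx mulr1n.
have := ler_norm_sum (index_enum 'I_m) (fun i => b 0 i) xpredT.
have := ler_norm (\sum_(i < m) b 0 i); lra.
Qed.

Section Problem.
Variables (n m : nat) (S : set ('rV[R]_n * 'rV[R]_m)).

Let Uimg := upper_image S.
Let Ugen := Defs.msum (@Pobj R n m @` S) (@orthant R (m + 1)).

Lemma orthant_recc_upper o : orthant o -> recc Uimg o.
Proof.
move=> o0; apply: recc_closure => _ [_ [z Sz <-] [q q0 <-]] l l0.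
apply: subset_closure; exists (Pobj z); first by exists z.
by exists (q + l *: o); [exact/orthantD/orthantZ | rewrite addrA].
Qed.

(* P maps recession directions of cl Y to recession directions of the upper
   image, by continuity of y |-> P y + q on cl Y. *)
Lemma obj_recc_upper d : recc (closure (projY S)) d -> recc Uimg (d *m obj_mx m).
Proof.
move=> dY; apply: recc_closure => _ [_ [[x y] Sxy <-] [q q0 <-]] l l0.
have sub : (fun y => y *m obj_mx m + q) @` projY S `<=` Ugen.
  move=> _ [y' [x' Sxy'] <-]; exists (Pobj (x', y')); first by exists (x', y').
  by exists q; rewrite // PobjE.
have Yy : closure (projY S) y by apply: subset_closure; exists x.
have := closure_image_sub (obj_continuous _ q) sub _ (ex_intro2 _ _ _ (dY y Yy l l0) erefl).
by rewrite PobjE /= mulmxDl -scalemxAl addrAC.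
Qed.

(* For m = 0 the projection Y of a nonempty S is the whole space R^0. *)
Lemma dim_pos z : S z -> projY S <> setT -> (0 < m)%N.
Proof.
move=> Sz Yfull; rewrite lt0n; apply/negP => /eqP m0; apply: Yfull.
apply/seteqP; split => // y _; exists z.1.
have -> : y = z.2 by apply/rowP => -[j lt_jm]; exfalso; by rewrite m0 in lt_jm.
by rewrite -surjective_pairing.
Qed.

Section Solution.
Variables (p : \bar R) (eps : R) (Sbar : seq ('rV[R]_n * 'rV[R]_m)).
Hypotheses (m_gt0 : (0 < m)%N) (p_ge1 : (1 <= p)%E).
Hypothesis CP_cover : projY S `<=` Defs.msum (Defs.msum (Defs.conv [set` map snd Sbar])
  (recc (closure (projY S)))) (@pball R p m eps).

Let s := kappa m p * eps * (pnorm p (const_mx 1 : 'rV[R]_(m + 1)))^-1.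
Let target := Defs.msum (Defs.conv [set` map (@Pobj R n m) Sbar]) (recc Uimg).

Lemma closed_target : closed target.
Proof.
apply: closed_msum_compact; first exact: conv_seq_compact.
by apply: closed_recc; exact: closed_closure.
Qed.

(* The decomposition P(c + d + b) + q + s 1 = P c + (P d + (P b + s 1 + q)). *)
Lemma generator_in_target a : Ugen a -> target (a + s *: const_mx 1).
Proof.
move=> [_ [[x y] Sxy <-] [q q0 <-]].
have /CP_cover [_ [c cconv [d drecc <-]] [b bball <-]] : projY S y by exists x.
exists (c *m obj_mx m).
  apply: conv_mulmx cconv => _ /mapP [z zS ->]; rewrite -PobjE; exact: map_f.
exists (d *m obj_mx m + ((b *m obj_mx m + s *: const_mx 1) + q)).
  apply: recc_add; first exact: obj_recc_upper.
  apply/orthant_recc_upper/orthantD => //; apply: obj_orthant.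
  exact: l1_le_kappa_pnorm.
rewrite PobjE /= !mulmxDl.
move: (c *m _) (d *m _) (b *m _) (s *: _) => C D B E.
by apply/rowP => k; rewrite !mxE; ring.
Qed.

(* The inclusion passes to the closure since the target is closed. *)
Lemma upper_image_covered : Uimg `<=` Defs.msum target [set - s *: const_mx 1].
Proof.
move=> u Uu; exists (u + s *: const_mx 1); last first.
  by exists (- s *: const_mx 1); rewrite // scaleNr addrK.
apply: closed_target.
apply: (closure_image_sub (shift_continuous (s *: const_mx 1)) _ _ (ex_intro2 _ _ u Uu erefl)).
by move=> _ [a Aa <-]; exact: generator_in_target.
Qed.

End Solution.
End Problem.
End ConvexProjection.

Theorem mainTheorem6 (R : realType) (n m : nat)
    (S : set ('rV[R]_n * 'rV[R]_m)) (p : \bar R) (eps : R)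
    (Sbar : seq ('rV[R]_n * 'rV[R]_m)) :
  convex_pairs S ->
  CP_self_bounded S ->
  (1 <= p)%E ->
  0 < eps ->
  CP_eps_solution p eps S Sbar ->
  MOCP_eps_solution p (kappa m p * eps) S Sbar.
Proof.
move=> _ [Yfull _] p_ge1 _ [Sbar_ne SbarS CP_cover].
have [z zS] : exists z, z \in Sbar.
  by case: Sbar Sbar_ne {SbarS CP_cover} => [//|z ? _]; exists z; rewrite inE eqxx.
have m_gt0 := @dim_pos R n m S z (SbarS z zS) Yfull.
by split => //; apply: upper_image_covered.
Qed.
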